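(* Let $n\geq 4$ and $m=\lfloor (n-2)/2\rfloor$. Then \[R_n(z)=(1+z)^m\sum_{q} z^{\mathrm{run}(q)},\] where the sum is over all permutations $q$ of length $n$ that are minimal in their orbit under the action of $G_m$. In particular, $R_n(z)$ is divisible by $(1+z)^m$.
   Context: For a permutation $p=p_1p_2\cdots p_n$ and an index $i\in[2,n-1]$, $p$ changes direction at $i$ if $p_{i-1}<p_i>p_{i+1}$ or $p_{i-1}>p_i<p_{i+1}$; $\mathrm{run}(p)=k$ means $p$ changes direction exactly $k-1$ times (the number of alternating runs). $R_n(z)=\sum_p z^{\mathrm{run}(p)}$, summed over all permutations $p$ of length $n$. For a string $s$ of distinct integers with underlying set $S$, its complement relative to $S$ is obtained by replacing, for each $j$, the $j$th smallest element of $S$ by the $j$th largest element of $S$. For $1\leq i\leq n$, $c_i$ is the map on permutations of length $n$ that leaves $p_1\cdots p_{i-1}$ unchanged and replaces $p_ip_{i+1}\cdots p_n$ by its complement relative to $\{p_i,\dots,p_n\}$. If $n$ is even, $\mathcal C_n=\{c_3,c_5,\dots,c_{n-1}\}$; if $n$ is odd, $\mathcal C_n=\{c_3,c_5,\dots,c_{n-2}\}$; $G_m\cong(\mathbb Z_2)^m$ is the group generated by $\mathcal C_n$ (these are pairwise commuting involutions), acting on permutations of length $n$. A permutation $q$ is minimal in its orbit if it has the smallest number of alternating runs among all permutations in its $G_m$-orbit (there is exactly one such permutation in each orbit). *)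

From mathcomp Require Import all_boot all_order all_algebra.
Set Implicit Arguments. Unset Strict Implicit. Unset Printing Implicit Defensive.
Import GRing.Theory.

(* A permutation of length n is modelled as an injective function
   'I_n -> 'I_n (values 0..n-1 at positions 0..n-1; position k here is
   position k+1 of the paper). *)
Definition word (n : nat) := {ffun 'I_n -> 'I_n}.

Section Defs.
Variable n : nat.

Definition wval (p : word n) (k : nat) : nat :=
  if k < n =P true is ReflectT h then val (p (Ordinal h)) else 0.

Definition turn (p : word n) (k : nat) : bool :=
  ((wval p k.-1 < wval p k) && (wval p k > wval p k.+1)) ||
  ((wval p k.-1 > wval p k) && (wval p k < wval p k.+1)).

Definition run (p : word n) : nat :=
  (\sum_(1 <= k < n.-1) turn p k).+1.

Definition Rpoly : {poly int} :=
  \sum_(p : word n | injectiveb p) 'X^(run p).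

Definition rank_in (S : {set 'I_n}) (v : 'I_n) : nat :=
  #|[set u in S | u < v]|.

Definition compl_in (S : {set 'I_n}) (v : 'I_n) : 'I_n :=
  odflt v [pick w in S | rank_in S w == #|S| - 1 - rank_in S v].

(* c_i (paper's 1-indexed i): positions i..n, i.e. 0-indexed k >= i-1 *)
Definition suffix_set (i : nat) (p : word n) : {set 'I_n} :=
  [set v : 'I_n | [exists k : 'I_n, (i.-1 <= k) && (p k == v)]].

Definition cmap (i : nat) (p : word n) : word n :=
  [ffun k : 'I_n => if i.-1 <= k then compl_in (suffix_set i p) (p k)
                    else p k].

Definition Cidx (i : nat) : bool :=
  if ~~ odd n then [&& odd i, 3 <= i & i <= n.-1]
  else [&& odd i, 3 <= i & i <= n - 2].

(* one generator step, and the orbit under the group generated by C_n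
   (the generators are involutions, so the orbit is the closure under
   generator steps) *)
Definition gstep : rel (word n) :=
  fun p q => [exists i : 'I_n.+1, Cidx i && (q == cmap i p)].

Definition in_orbit (p q : word n) : bool := connect gstep p q.

Definition minimal_in_orbit (q : word n) : bool :=
  injectiveb q && [forall q' : word n, in_orbit q q' ==> (run q <= run q')].

End Defs.

(* The generators c_i (i odd) act independently on runs.  Complementing the
   suffix p_i ... p_n reverses every comparison inside it, so c_i changes only
   the direction changes at i-1 and i.  These depend on the comparisons between
   p_(i-2), p_(i-1), p_i, p_(i+1): c_i keeps the first, reverses the last and
   may change the middle one, and in every case the number of runs moves by
   exactly one.  Generators are two apart and commute, so whether c_j lowers
   the number of runs is not affected by c_i.  Thus on each orbit
   run = run(min) + #(generators that lower run), the orbit is a cube {0,1}^m,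
   and summing z^run over it gives (1+z)^m z^run(min). *)

From mathcomp Require Import all_boot all_order all_algebra zify.
Import GRing.Theory.
Set Implicit Arguments. Unset Strict Implicit. Unset Printing Implicit Defensive.

Section WeightFlips.
Variables (T J : finType) (A : pred T) (C : pred J) (f : J -> T -> T) (w : T -> nat).

Definition flip_step : rel T := fun p q => [exists i, C i && (q == f i p)].

Definition lowers (i : J) (p : T) : bool := w (f i p) < w p.

Definition nlowers (p : T) : nat := \sum_(i | C i) lowers i p.

Hypothesis flipK : forall i, C i -> involutive (f i).
Hypothesis flip_closed : forall i p, C i -> A p -> A (f i p).
Hypothesis flip_weight : forall i p, C i -> A p ->
  w (f i p) = (w p).+1 \/ w p = (w (f i p)).+1.
Hypothesis lowers_flip : forall i j p, C i -> C j -> i != j -> A p ->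
  lowers j (f i p) = lowers j p.

Lemma lowers_flipK i p : C i -> A p -> lowers i (f i p) = ~~ lowers i p.
Proof.
by move=> Ci Ap; rewrite /lowers flipK //; case: (flip_weight Ci Ap) => ->; lia.
Qed.

Lemma weight_flip i p : C i -> A p -> ~~ lowers i p -> w (f i p) = (w p).+1.
Proof. by move=> Ci Ap; rewrite /lowers; case: (flip_weight Ci Ap) => ->; lia. Qed.

Lemma weight_nlowers_flip i p : C i -> A p ->
  w (f i p) + nlowers p = w p + nlowers (f i p).
Proof.
move=> Ci Ap; rewrite /nlowers (bigD1 i Ci) [in RHS](bigD1 i Ci) /=.
have -> : \sum_(j | C j && (j != i)) lowers j (f i p) =
          \sum_(j | C j && (j != i)) lowers j p.
  by apply: eq_bigr => j /andP[Cj ji]; rewrite lowers_flip // eq_sym.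
rewrite lowers_flipK //; case: (flip_weight Ci Ap) => e; rewrite /lowers e; lia.
Qed.

Lemma weight_nlowers_connect p q : A p -> connect flip_step p q ->
  w q + nlowers p = w p + nlowers q.
Proof.
move=> Ap /connectP[s]; elim: s p Ap => [|r s IH] p Ap /=; first by move=> _ ->.
case/andP=> /existsP[i /andP[Ci /eqP->]] path_s /IH-/(_ (flip_closed Ci Ap)) e.
have := weight_nlowers_flip Ci Ap; lia.
Qed.

Lemma minimal_flipsE q : A q ->
  [forall q', connect flip_step q q' ==> (w q <= w q')] =
  [forall i, C i ==> ~~ lowers i q].
Proof.
move=> Aq; apply/forallP/forallP => [min_q i|no_lowers q'].
  apply/implyP=> Ci; rewrite /lowers -leqNgt; apply: (implyP (min_q _)).
  by apply: connect1; apply/existsP; exists i; rewrite Ci eqxx.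
have nlowers0 : nlowers q = 0.
  by apply: big1 => i Ci; move/implyP: (no_lowers i) => /(_ Ci)/negbTE->.
apply/implyP=> /(weight_nlowers_connect Aq); rewrite nlowers0; lia.
Qed.

Lemma flip_closedE i p : C i -> A (f i p) = A p.
Proof.
move=> Ci; apply/idP/idP => [|/(flip_closed Ci)//].
by move/(flip_closed Ci); rewrite flipK.
Qed.

Section GeneratingFunction.
Variable R : nzSemiRingType.
Local Open Scope ring_scope.

Definition settled (s : seq J) (p : T) : bool := A p && all (fun i => ~~ lowers i p) s.

Lemma sum_settled_cons i s : C i -> i \notin s -> all C s ->
  \sum_(p | settled s p) 'X^(w p) =
  (1 + 'X) * \sum_(p | settled (i :: s) p) 'X^(w p) :> {poly R}.
Proof.
move=> Ci i_s sC; rewrite (bigID (lowers i)) /= addrC mulrDl mul1r.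
congr (_ + _); first by apply: eq_bigl => p; rewrite /settled /= andbAC -andbA.
(* f i maps the elements it raises bijectively onto those it lowers. *)
rewrite (reindex_inj (can_inj (flipK Ci))) big_distrr /=.
rewrite (eq_bigl (settled (i :: s))) => [|q].
  apply: eq_bigr => q /andP[Aq /andP[not_lowers _]].
  by rewrite weight_flip // exprS.
rewrite /settled /= flip_closedE //; case Aq: (A q) => //=.
rewrite lowers_flipK // andbC; congr (_ && _); apply: eq_in_all => j j_s.
rewrite lowers_flip //; first exact: (allP sC).
by apply: contraNneq i_s => ->.
Qed.

Lemma sum_settled s : uniq s -> all C s ->
  \sum_(p | A p) 'X^(w p) =
  (1 + 'X) ^+ size s * \sum_(p | settled s p) 'X^(w p) :> {poly R}.
Proof.
elim: s => [|i s IH] /=.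
  by move=> _ _; rewrite expr0 mul1r; apply: eq_bigl => p; rewrite /settled andbT.
case/andP=> i_s uniq_s /andP[Ci sC].
by rewrite IH // (sum_settled_cons Ci i_s sC) mulrA -exprSr.
Qed.

Lemma sum_flips_factor :
  \sum_(p | A p) 'X^(w p) =
  (1 + 'X) ^+ #|C| *
    \sum_(p | A p && [forall i, C i ==> ~~ lowers i p]) 'X^(w p) :> {poly R}.
Proof.
rewrite cardE (sum_settled (enum_uniq C)); last by apply/allP=> i; rewrite mem_enum.
congr (_ * _); apply: eq_bigl => p; congr (_ && _).
apply/allP/forallP=> [all_C i|forall_C i].
  by apply/implyP=> Ci; apply: all_C; rewrite mem_enum.
by rewrite mem_enum; apply/implyP: (forall_C i).
Qed.

End GeneratingFunction.
End WeightFlips.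

Section Complement.
Variable n : nat.
Implicit Types (S : {set 'I_n}) (u v : 'I_n).

Lemma rank_in_lt S v : v \in S -> rank_in S v < #|S|.
Proof.
move=> vS; apply: proper_card; apply/properP; split.
  by apply/subsetP=> u; rewrite inE => /andP[].
by exists v; rewrite // inE ltnn andbF.
Qed.

Lemma rank_in_mono S u v : u \in S -> u < v -> rank_in S u < rank_in S v.
Proof.
move=> uS uv; apply: proper_card; apply/properP; split.
  by apply/subsetP=> w; rewrite !inE => /andP[-> wu]; apply: ltn_trans wu uv.
by exists u; rewrite !inE ?uS ?uv // ltnn andbF.
Qed.

Lemma rank_in_ltE S u v : u \in S -> v \in S ->
  (rank_in S u < rank_in S v) = (u < v).
Proof.
move=> uS vS; case: (ltngtP u v) => [uv|vu|/val_inj->]; first exact: rank_in_mono.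
  by apply/negbTE; rewrite -leqNgt ltnW // rank_in_mono.
by rewrite ltnn.
Qed.

Lemma rank_in_inj S : {in S &, injective (rank_in S)}.
Proof.
move=> u v uS vS e; case: (ltngtP u v) => [uv|vu|/val_inj//].
  by have := rank_in_mono uS uv; rewrite e ltnn.
by have := rank_in_mono vS vu; rewrite e ltnn.
Qed.

Lemma rank_in_onto S r : r < #|S| -> exists2 v, v \in S & rank_in S v = r.
Proof.
move=> rS; set ranks := [seq rank_in S v | v <- enum S].
have uniq_ranks : uniq ranks.
  by rewrite map_inj_in_uniq ?enum_uniq // => u v; rewrite !mem_enum; apply: rank_in_inj.
have sub_ranks : {subset ranks <= iota 0 #|S|}.
  by move=> _ /mapP[v vS ->]; rewrite mem_iota rank_in_lt // -mem_enum.
have [|_ ranks_iota] := uniq_min_size uniq_ranks sub_ranks.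
  by rewrite size_iota size_map -cardE.
have /mapP[v vS ->] : r \in ranks by rewrite ranks_iota mem_iota.
by exists v; rewrite // -mem_enum.
Qed.

Lemma compl_inP S v : v \in S ->
  compl_in S v \in S /\ rank_in S (compl_in S v) = #|S| - 1 - rank_in S v.
Proof.
move=> vS; rewrite /compl_in; case: pickP => [w /andP[wS /eqP->] //|none].
have [|w wS wr] := @rank_in_onto S (#|S| - 1 - rank_in S v).
  by have := rank_in_lt vS; lia.
by move: (none w); rewrite wS wr eqxx.
Qed.

Lemma compl_in_mem S v : v \in S -> compl_in S v \in S.
Proof. by case/compl_inP. Qed.

Lemma compl_in_lt S u v : u \in S -> v \in S ->
  (compl_in S u < compl_in S v) = (v < u).
Proof.
move=> uS vS; have [cuS cu] := compl_inP uS; have [cvS cv] := compl_inP vS.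
rewrite -(rank_in_ltE cuS cvS) cu cv -(rank_in_ltE vS uS).
by have := rank_in_lt uS; have := rank_in_lt vS; lia.
Qed.

Lemma compl_inK S v : v \in S -> compl_in S (compl_in S v) = v.
Proof.
move=> vS; have [cvS cv] := compl_inP vS; have [ccvS ccv] := compl_inP cvS.
by apply: (rank_in_inj ccvS vS); rewrite ccv cv; have := rank_in_lt vS; lia.
Qed.

Lemma compl_in_inj S : {in S &, injective (compl_in S)}.
Proof. by move=> u v uS vS e; rewrite -(compl_inK uS) e compl_inK. Qed.

Lemma rank_in_above S u : u \in S ->
  rank_in S u + #|[set v in S | u < v]| = #|S| - 1.
Proof.
move=> uS; rewrite (cardsD1 u S) uS add1n subn1 /=.
rewrite -(cardsID [set v : 'I_n | v < u] (S :\ u)) /rank_in.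
congr (_ + _); apply: eq_card => v; rewrite !inE -val_eqE.
  by case: (ltngtP v u); rewrite ?andbF ?andbT.
by case: (ltngtP v u); rewrite ?andbF ?andbT.
Qed.

Section OrderReversing.
Variables (S : {set 'I_n}) (phi : 'I_n -> 'I_n).
Hypothesis phi_rev : {in S &, forall u v, (phi u < phi v) = (v < u)}.

Lemma rev_inj : {in S &, injective phi}.
Proof.
move=> u v uS vS e; case: (ltngtP u v) => [uv|vu|/val_inj//].
  by have := phi_rev vS uS; rewrite e ltnn uv.
by have := phi_rev uS vS; rewrite e ltnn vu.
Qed.

Lemma rank_in_rev_imset u : u \in S ->
  rank_in (phi @: S) (phi u) = #|S| - 1 - rank_in S u.
Proof.
move=> uS; rewrite -(rank_in_above uS) addKn /rank_in.
have -> : [set x : 'I_n in phi @: S | x < phi u] = phi @: [set v : 'I_n in S | u < v].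
  apply/setP=> x; apply/idP/imsetP => [/setIdP[/imsetP[v vS ->]]|[v]].
    by rewrite phi_rev // => uv; exists v; rewrite // inE vS.
  by case/setIdP=> vS uv ->; apply/setIdP; split; [exact: imset_f | rewrite phi_rev].
by rewrite card_in_imset // => v w /setIdP[vS _] /setIdP[wS _]; apply: rev_inj.
Qed.

Lemma compl_in_rev_imset u : u \in S ->
  compl_in (phi @: S) (phi u) = phi (compl_in S u).
Proof.
move=> uS; have [cuS cu] := compl_inP uS.
have [cpuS cpu] := compl_inP (imset_f phi uS).
apply: (rank_in_inj cpuS (imset_f phi cuS)).
by rewrite cpu !rank_in_rev_imset // cu card_in_imset //; apply: rev_inj.
Qed.

End OrderReversing.

End Complement.

Section SuffixComplement.
Variable n : nat.
Implicit Types (p : word n) (i j : nat).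

Lemma suffix_setP i p v :
  reflect (exists2 k : 'I_n, i.-1 <= k & p k = v) (v \in suffix_set i p).
Proof.
rewrite inE; apply: (iffP existsP) => [[k /andP[ik /eqP pk]]|[k ik pk]].
  by exists k.
by exists k; rewrite ik pk eqxx.
Qed.

Lemma mem_suffix_set i p (k : 'I_n) : i.-1 <= k -> p k \in suffix_set i p.
Proof. by move=> ik; apply/suffix_setP; exists k. Qed.

Lemma suffix_set_notin i p (k : 'I_n) : injective p -> k < i.-1 ->
  p k \notin suffix_set i p.
Proof.
move=> p_inj ki; apply/suffix_setP=> [[l il /p_inj lk]].
by move: ki; rewrite -lk ltnNge il.
Qed.

Lemma suffix_set_sub i j p : j <= i -> suffix_set i p \subset suffix_set j p.
Proof.
move=> ji; apply/subsetP=> _ /suffix_setP[k ik <-]; apply: mem_suffix_set; lia.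
Qed.

Lemma cmapE i p k :
  cmap i p k = if i.-1 <= k then compl_in (suffix_set i p) (p k) else p k.
Proof. by rewrite ffunE. Qed.

Lemma suffix_set_cmap_le i j p : j <= i -> suffix_set j (cmap i p) = suffix_set j p.
Proof.
move=> ji; have Sij := subsetP (suffix_set_sub p ji).
apply/setP=> v; apply/suffix_setP/suffix_setP => -[k jk <-].
  rewrite cmapE; case: ifP => ik; last by exists k.
  by apply/suffix_setP/Sij/compl_in_mem/mem_suffix_set.
case: (leqP i.-1 k) => ik; last by exists k; rewrite // cmapE leqNgt ik.
have /suffix_setP[l il pl] := compl_in_mem (mem_suffix_set p ik).
exists l; first lia.
by rewrite cmapE il pl compl_inK // mem_suffix_set.
Qed.

Lemma suffix_set_cmap_ge i j p : j <= i ->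
  suffix_set i (cmap j p) = compl_in (suffix_set j p) @: suffix_set i p.
Proof.
move=> ji; have jk k : i.-1 <= k -> j.-1 <= k by lia.
apply/setP=> v; apply/suffix_setP/imsetP => [[k ik <-]|[_ /suffix_setP[k ik <-] ->]].
  by exists (p k); rewrite ?mem_suffix_set // cmapE jk.
by exists k; rewrite // cmapE jk.
Qed.

Lemma cmapK i : involutive (cmap (n := n) i).
Proof.
move=> p; apply/ffunP=> k; rewrite !cmapE suffix_set_cmap_le //.
by case: ifP => ik; rewrite ik // compl_inK // mem_suffix_set.
Qed.

Lemma cmapC i j p : cmap j (cmap i p) = cmap i (cmap j p).
Proof.
wlog ji : i j / j <= i.
  by move=> hyp; case: (leqP j i) => [/hyp//|/ltnW/hyp->].
apply/ffunP=> k; rewrite !cmapE suffix_set_cmap_le // suffix_set_cmap_ge //.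
case: (leqP i.-1 k) => ik //; have jk : j.-1 <= k by lia.
rewrite jk compl_in_rev_imset ?mem_suffix_set // => u v uS vS.
by rewrite compl_in_lt //; apply: (subsetP (suffix_set_sub p ji)).
Qed.

Lemma cmap_inj i p : injectiveb p -> injectiveb (cmap i p).
Proof.
move/injectiveP=> p_inj; apply/injectiveP=> k l; rewrite !cmapE.
have notin (m : 'I_n) : ~~ (i.-1 <= m) -> p m \notin suffix_set i p.
  by rewrite -ltnNge; apply: suffix_set_notin.
case: ifP => ik; case: ifP => il.
- by move/(compl_in_inj (mem_suffix_set p ik) (mem_suffix_set p il))/p_inj.
- move=> e; move: (compl_in_mem (mem_suffix_set p ik)).
  by rewrite e (negPf (notin _ (negbT il))).
- move=> e; move: (compl_in_mem (mem_suffix_set p il)).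
  by rewrite -e (negPf (notin _ (negbT ik))).
- exact: p_inj.
Qed.

End SuffixComplement.

Lemma big_nat_exchange2 (F G : nat -> nat) lo a hi : lo <= a -> a.+2 <= hi ->
  (forall k, lo <= k < hi -> k != a -> k != a.+1 -> F k = G k) ->
  \sum_(lo <= k < hi) F k + (G a + G a.+1) = \sum_(lo <= k < hi) G k + (F a + F a.+1).
Proof.
move=> lo_a a_hi FG.
have split H : \sum_(lo <= k < hi) H k =
    \sum_(lo <= k < a) H k + (H a + H a.+1) + \sum_(a.+2 <= k < hi) H k.
  have a1_hi : a.+1 < hi by [].
  rewrite (big_cat_nat lo_a (ltnW (ltnW a_hi))) (big_ltn (ltnW a1_hi)).
  by rewrite (big_ltn a1_hi) /= !addnA.
have low : \sum_(lo <= k < a) F k = \sum_(lo <= k < a) G k.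
  by apply: eq_big_nat => k /andP[lo_k k_a]; apply: FG; lia.
have high : \sum_(a.+2 <= k < hi) F k = \sum_(a.+2 <= k < hi) G k.
  by apply: eq_big_nat => k /andP[a_k k_hi]; apply: FG; lia.
rewrite !split low high; lia.
Qed.

(* x, y, z are the three consecutive ascents around the cut of c_i, which keeps
   x, replaces y by some y' and negates z. *)
Lemma addb_turns_pm1 (x y y' z : bool) :
  (x (+) y') + (y' (+) ~~ z) = ((x (+) y) + (y (+) z)).+1 \/
  (x (+) y) + (y (+) z) = ((x (+) y') + (y' (+) ~~ z)).+1.
Proof. by case: x y y' z => [] [] [] []; auto. Qed.

Section Turns.
Variable n : nat.
Implicit Types (p : word n) (i j k : nat).

Lemma wvalO p k (kn : k < n) : wval p k = p (Ordinal kn).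
Proof.
rewrite /wval; case: eqP => [kn'|]; last by rewrite kn.
by rewrite (bool_irrelevance kn' kn).
Qed.

Lemma wval_default p k : n <= k -> wval p k = 0.
Proof. by rewrite /wval leqNgt; case: eqP => // kn /negP. Qed.

Lemma wval_eq p k l : injectiveb p -> k < n -> l < n ->
  (wval p k == wval p l) = (k == l).
Proof.
move=> /injectiveP p_inj kn ln.
by rewrite (wvalO p kn) (wvalO p ln) val_eqE (inj_eq p_inj) -val_eqE.
Qed.

Lemma wval_cmap_lt p i k : k < i.-1 -> wval (cmap i p) k = wval p k.
Proof.
move=> ki; case: (ltnP k n) => kn; last by rewrite !wval_default.
by rewrite !(wvalO _ kn) cmapE leqNgt ki.
Qed.

Lemma wval_cmap_ltE p i k l : i.-1 <= k -> i.-1 <= l -> k < n -> l < n ->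
  (wval (cmap i p) k < wval (cmap i p) l) = (wval p l < wval p k).
Proof.
move=> ik il kn ln; rewrite !(wvalO _ kn) !(wvalO _ ln) !cmapE /= ik il.
by rewrite compl_in_lt // mem_suffix_set.
Qed.

Definition ascent p k : bool := wval p k < wval p k.+1.

Lemma turn_ascent p k : injectiveb p -> 0 < k -> k.+1 < n ->
  turn p k = ascent p k.-1 (+) ascent p k.
Proof.
move=> p_inj k0 kn; rewrite /turn /ascent prednK //.
have ab : wval p k.-1 != wval p k by rewrite wval_eq //; lia.
have bc : wval p k != wval p k.+1 by rewrite wval_eq //; lia.
move: ab bc; set a := wval p k.-1; set b := wval p k; set c := wval p k.+1.
by case: (ltngtP a b); case: (ltngtP b c).
Qed.

Lemma ascent_cmap_lt p i k : k.+1 < i.-1 -> ascent (cmap i p) k = ascent p k.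
Proof. by move=> ki; rewrite /ascent !wval_cmap_lt // ltnW. Qed.

Lemma ascent_cmap_ge p i k : injectiveb p -> i.-1 <= k -> k.+1 < n ->
  ascent (cmap i p) k = ~~ ascent p k.
Proof.
move=> p_inj ik kn; rewrite /ascent wval_cmap_ltE //; try lia.
by rewrite ltnNge leq_eqVlt wval_eq ?(ltn_eqF (ltnSn k)) // ltnW.
Qed.

Lemma turn_cmap_far p i k : injectiveb p -> 0 < k -> k.+1 < n ->
  k != i.-2 -> k != i.-1 -> turn (cmap i p) k = turn p k.
Proof.
move=> p_inj k0 kn ki2 ki1; rewrite !turn_ascent ?cmap_inj //.
case: (ltnP k.+1 i.-1) => ik; first by rewrite !ascent_cmap_lt //; lia.
by rewrite !ascent_cmap_ge ?addNb ?addbN ?negbK //; lia.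
Qed.

Definition cut_turns i p : nat := turn p i.-2 + turn p i.-1.

Lemma run_cmap p i : injectiveb p -> 3 <= i -> i < n ->
  run (cmap i p) + cut_turns i p = run p + cut_turns i (cmap i p).
Proof.
case: i => [|[|[|i]]] // p_inj _ i_n; rewrite /run /cut_turns /= !addSn; congr _.+1.
apply: big_nat_exchange2 => [||k /andP[k0 kn] ki1 ki2]; try lia.
by rewrite turn_cmap_far //; lia.
Qed.

Lemma cut_turns_cmap p i : injectiveb p -> 3 <= i -> i < n ->
  cut_turns i (cmap i p) = (cut_turns i p).+1 \/
  cut_turns i p = (cut_turns i (cmap i p)).+1.
Proof.
case: i => [|[|[|i]]] // p_inj _ i_n; have i2 : i.+2 < n by lia.
rewrite /cut_turns /= !turn_ascent ?cmap_inj //=.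
rewrite ascent_cmap_lt // (ascent_cmap_ge (i := i.+3) (k := i.+2) p_inj (leqnn _) i_n).
exact: addb_turns_pm1.
Qed.

Lemma run_cmap_pm1 p i : injectiveb p -> 3 <= i -> i < n ->
  run (cmap i p) = (run p).+1 \/ run p = (run (cmap i p)).+1.
Proof.
move=> p_inj i3 i_n; have := run_cmap p_inj i3 i_n.
by case: (cut_turns_cmap p_inj i3 i_n) => ->; lia.
Qed.

Lemma cut_turns_cmap_far p i j : injectiveb p -> 3 <= i -> 3 <= j -> j < n ->
  (i.+2 <= j) || (j.+2 <= i) -> cut_turns j (cmap i p) = cut_turns j p.
Proof. by move=> p_inj i3 j3 j_n ij; rewrite /cut_turns !turn_cmap_far //; lia. Qed.

End Turns.

Section Generators.
Variable n : nat.
Implicit Types (p : word n) (i j : 'I_n.+1).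

Lemma CidxE k : Cidx n k = [&& odd k, 3 <= k & k <= ((n - 2)./2).*2.+1].
Proof.
rewrite /Cidx; case: ifP => odd_n.
all: by apply/and3P/and3P=> -[odd_k k3 k_le]; split => //; lia.
Qed.

Lemma Cidx_bounds k : Cidx n k -> [/\ odd k, 3 <= k & k < n].
Proof. by rewrite CidxE => /and3P[odd_k k3 k_le]; split => //; lia. Qed.

Lemma card_Cidx : #|(fun i : 'I_n.+1 => Cidx n i)| = (n - 2)./2.
Proof.
pose gen (t : 'I_(n - 2)./2) : 'I_n.+1 := inord t.*2.+3.
have genE t : gen t = t.*2.+3 :> nat by rewrite inordK //; have := ltn_ord t; lia.
have gen_inj : injective gen.
  by move=> t u /(congr1 (@nat_of_ord _)); rewrite !genE => tu; apply: ord_inj; lia.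
rewrite -[RHS]card_ord -cardsT -(card_imset _ gen_inj).
apply: eq_card => i; rewrite -[i \in _]/(Cidx n i) CidxE; apply/idP/imsetP => [|[t _ ->]].
  case/and3P=> odd_i i3 i_le; have tm : (i - 3)./2 < (n - 2)./2 by lia.
  by exists (Ordinal tm); rewrite //; apply: ord_inj; rewrite genE /=; lia.
by rewrite genE /= odd_double /=; have := ltn_ord t; lia.
Qed.

Lemma Cidx_run_cmap i p : Cidx n i -> injectiveb p ->
  run (cmap i p) = (run p).+1 \/ run p = (run (cmap i p)).+1.
Proof. by case/Cidx_bounds=> _ i3 i_n p_inj; apply: run_cmap_pm1. Qed.

Lemma Cidx_lowers_cmap i j p : Cidx n i -> Cidx n j -> i != j -> injectiveb p ->
  lowers (fun k : 'I_n.+1 => cmap k) (@run n) j (cmap i p) =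
  lowers (fun k : 'I_n.+1 => cmap k) (@run n) j p.
Proof.
case/Cidx_bounds=> odd_i i3 i_n /Cidx_bounds[odd_j j3 j_n] ij p_inj.
have far : (i.+2 <= j) || (j.+2 <= i) by move: ij; rewrite -val_eqE /=; lia.
have lowersE (q : word n) : injectiveb q ->
    (run (cmap j q) < run q) = (cut_turns j (cmap j q) < cut_turns j q).
  by move=> q_inj; have := run_cmap q_inj j3 j_n; lia.
rewrite /lowers !lowersE ?cmap_inj // cmapC.
by rewrite !(cut_turns_cmap_far _ i3 j3 j_n far) ?cmap_inj.
Qed.

End Generators.

Theorem mainTheorem4 (n : nat) (hn : 4 <= n) :
  let m := (n - 2)./2 in
  Rpoly n = ((1 + 'X) ^+ m * \sum_(q : word n | minimal_in_orbit q) 'X^(run q))%R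
  /\ ((1 + 'X) ^+ m %| Rpoly n)%R.
Proof.
move=> m.
have cmapK' (i : 'I_n.+1) : Cidx n i -> involutive (@cmap n i) by move=> _; apply: cmapK.
have cmap_inj' (i : 'I_n.+1) (p : word n) :
    Cidx n i -> injectiveb p -> injectiveb (cmap i p) by move=> _; apply: cmap_inj.
have [run_flip lowers_flip] := (@Cidx_run_cmap n, @Cidx_lowers_cmap n).
have minimalE q : minimal_in_orbit q = injectiveb q &&
    [forall i : 'I_n.+1, Cidx n i ==> ~~ lowers (fun k : 'I_n.+1 => cmap k) (@run n) i q].
  rewrite /minimal_in_orbit; case: (boolP (injectiveb q)) => //= q_inj.
  exact: (minimal_flipsE cmapK' cmap_inj' run_flip lowers_flip).
have Rpoly_factor : Rpoly n =
    ((1 + 'X) ^+ m * \sum_(q : word n | minimal_in_orbit q) 'X^(run q))%R.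
  rewrite /Rpoly (sum_flips_factor cmapK' cmap_inj' run_flip lowers_flip) card_Cidx.
  by congr (_ * _)%R; apply: eq_bigl => q; rewrite minimalE.
by split; rewrite // Rpoly_factor dvdp_mulIl.
Qed.
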